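(* There exist rings $R\supseteq S$ (with the same $1$) and a central idempotent $e$ of $R$ such that $R=Se+S(1-e)$, $S$ is finitely presented as a ring, but $R$ is not finitely presented as a ring.
   Context: A ring is finitely presented if it is isomorphic to $F/I$ where $F$ is a free ring (free $\mathbb{Z}$-algebra with $1$) on finitely many generators and $I$ is a two-sided ideal of $F$ generated by finitely many elements. *)

From HB Require Import structures.
From mathcomp Require Import all_boot all_algebra.
From mathcomp.multinomials Require Import monalg.

Set Implicit Arguments.
Unset Strict Implicit.
Unset Printing Implicit Defensive.

Import GRing.Theory.
Local Open Scope ring_scope.

(* The free ring (free Z-algebra with 1) on n generators: the monoid ring
   Z[<x_0,...,x_{n-1}>] of the free monoid {fmonom 'I_n} on 'I_n. *)
Definition free_ring (n : nat) : nzRingType := {malg int[{fmonom 'I_n}]}.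

Definition in_twosided_ideal (A : nzRingType) (m : nat) (rels : 'I_m -> A)
    (p : A) : Prop :=
  exists s : seq (A * 'I_m * A),
    p = \sum_(t <- s) (t.1.1 * rels t.1.2 * t.2).

(* R is finitely presented: R is isomorphic to F/I with F free on finitely
   many generators and I a finitely generated two-sided ideal; equivalently
   (first isomorphism theorem, written out) there is a surjective ring
   morphism F -> R whose kernel is exactly I. *)
Definition finitely_presented (R : nzRingType) : Prop :=
  exists (n m : nat) (rels : 'I_m -> free_ring n)
         (f : {rmorphism free_ring n -> R}),
    (forall r : R, exists p : free_ring n, f p = r) /\
    (forall p : free_ring n, f p = 0 <-> in_twosided_ideal rels p).

From HB Require Import structures.
From mathcomp Require Import all_boot all_algebra.
From mathcomp.multinomials Require Import monalg.
From mathcomp Require Import boolp.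

(* Let S be the free ring on x, y, and let rho_N : S -> M_(N+1)(Z) send x to
   the matrix unit E_(N,0) and y to the nilpotent shift, so that
   rho_N (x y^k x) = [k = N] E_(N,0).  Let I be the ideal of the elements
   killed by rho_N for all large N, Q = S / I, R = S * Q with S embedded by
   s |-> (s, s mod I), and e = (1, 0).  A direct factor of a finitely
   presented ring is finitely presented, so it suffices that Q is not.  Were Q
   finitely presented, comparing a finite presentation of Q with S -> Q would
   show that a single rho_M kills all of I; but x y^M x lies in I and is not
   killed by rho_M. *)

Set Implicit Arguments.
Unset Strict Implicit.
Unset Printing Implicit Defensive.

Import GRing.Theory.
Local Open Scope ring_scope.

Section FreeRing.
Variable n : nat.

Definition free_gen (i : 'I_n) : free_ring n := << fmu i >>.

Lemma free_monomE (s : seq 'I_n) :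
  << FMonom s >> = \prod_(i <- s) free_gen i :> free_ring n.
Proof.
elim: s => [|i s IH]; first by rewrite big_nil -fmoneE.
rewrite big_cons -IH /free_gen malgM_def fgmulUU mulr1; congr << _ >>.
by apply/eqP; rewrite fmP fmM fmU.
Qed.

Section Eval.
Variables (T : nzRingType) (t : 'I_n -> T).

Definition free_monom_eval (m : {fmonom 'I_n}) : T := \prod_(i <- m) t i.

Lemma free_monom_eval_is_mmorphism : mmorphism free_monom_eval.
Proof.
split=> [m1 m2|]; first by rewrite /free_monom_eval fmM big_cat.
by rewrite /free_monom_eval fm1 big_nil.
Qed.

HB.instance Definition _ := isMultiplicative.Build {fmonom 'I_n} T
  free_monom_eval free_monom_eval_is_mmorphism.

Definition free_eval (p : free_ring n) : T := mmap intr free_monom_eval p.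

Lemma free_eval_is_additive : additive free_eval.
Proof. exact: mmap_is_additive. Qed.

Lemma free_eval_is_multiplicative : multiplicative free_eval.
Proof.
by apply: commr_mmap_is_multiplicative => c m m'; apply/commr_sym/commr_int.
Qed.

HB.instance Definition _ := GRing.isAdditive.Build (free_ring n) T
  free_eval free_eval_is_additive.
HB.instance Definition _ := GRing.isMultiplicative.Build (free_ring n) T
  free_eval free_eval_is_multiplicative.

Lemma free_eval_gen i : free_eval (free_gen i) = t i.
Proof. by rewrite /free_eval mmapU /free_monom_eval fmU big_seq1 mul1r. Qed.

End Eval.

Lemma free_rmorphE {T : nzRingType} (g : {rmorphism free_ring n -> T}) p :
  g p = free_eval (g \o free_gen) p.
Proof.
rewrite {1}(monalgE p) rmorph_sum /free_eval mmapE; apply: eq_bigr => m _.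
have -> : << p@_m *g m >> = (p@_m)%:~R * << m >> :> free_ring n.
  have intr_malgC : ((p@_m)%:~R : free_ring n) = (p@_m)%:MP.
    by rewrite -{2}[p@_m]intz rmorph_int.
  by rewrite intr_malgC malgM_def fgmulUU mulr1 mul1m.
by rewrite rmorphM rmorph_int -[m]fmK free_monomE rmorph_prod.
Qed.

Lemma free_rmorph_ext {T : nzRingType} (g1 g2 : {rmorphism free_ring n -> T}) :
  g1 \o free_gen =1 g2 \o free_gen -> g1 =1 g2.
Proof.
move=> eq_gen p; rewrite free_rmorphE [RHS]free_rmorphE.
rewrite /free_eval !mmapE; apply: eq_bigr => m _; congr (_ * _).
by apply: eq_bigr => i _; apply: eq_gen.
Qed.

Lemma free_lift (A B : nzRingType) (pi : {rmorphism A -> B})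
    (f : {rmorphism free_ring n -> B}) :
  (forall b, exists a, pi a = b) ->
  exists phi : {rmorphism free_ring n -> A}, forall p, pi (phi p) = f p.
Proof.
move=> pi_surj; have [t pi_t] := fin_all_exists (fun i => pi_surj (f (free_gen i))).
exists (free_eval t); apply: (@free_rmorph_ext _ (pi \o free_eval t) f) => i /=.
by rewrite free_eval_gen pi_t.
Qed.

End FreeRing.

Arguments free_lift {n A B} pi f.

Lemma free_ring_finitely_presented n : finitely_presented (free_ring n).
Proof.
exists n, 0%N, (fun j : 'I_0 => 0), idfun; split; first by move=> r; exists r.
move=> p; split => [/= ->|[s ->]]; first by exists [::]; rewrite big_nil.
by case: s => [|[[a [j lt_j0]] b] s] //; rewrite big_nil.
Qed.

Section TwosidedIdealMembership.
Variables (A : nzRingType) (m : nat) (rels : 'I_m -> A).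

Lemma in_twosided_ideal_gen a j b : in_twosided_ideal rels (a * rels j * b).
Proof. by exists [:: (a, j, b)]; rewrite big_seq1. Qed.

Lemma in_twosided_ideal_rel j : in_twosided_ideal rels (rels j).
Proof. by rewrite -[rels j]mul1r -[_ * _]mulr1; apply: in_twosided_ideal_gen. Qed.

Lemma in_twosided_idealD p q :
  in_twosided_ideal rels p -> in_twosided_ideal rels q ->
  in_twosided_ideal rels (p + q).
Proof. by move=> [s ->] [s' ->]; exists (s ++ s'); rewrite big_cat. Qed.

Lemma in_twosided_ideal_reindex k (rels' : 'I_k -> A) (h : 'I_m -> 'I_k) p :
  rels =1 rels' \o h -> in_twosided_ideal rels p -> in_twosided_ideal rels' p.
Proof.
move=> rels_h [s ->]; exists [seq (t.1.1, h t.1.2, t.2) | t <- s].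
by rewrite big_map; apply: eq_bigr => t _; rewrite rels_h.
Qed.

Lemma rmorph_twosided_ideal_eq0 (T : nzRingType) (g : {rmorphism A -> T}) p :
  (forall j, g (rels j) = 0) -> in_twosided_ideal rels p -> g p = 0.
Proof.
move=> g_rels [s ->]; rewrite rmorph_sum big1 // => t _.
by rewrite !rmorphM g_rels mulr0 mul0r.
Qed.

End TwosidedIdealMembership.

Lemma mul_pairE (A B : nzRingType) (a a' : A) (b b' : B) :
  (a, b) * (a', b') = (a * a', b * b').
Proof. by []. Qed.

Lemma finitely_presented_snd (A B : nzRingType) :
  finitely_presented (A * B)%type -> finitely_presented B.
Proof.
move=> [n [m [rels [f [f_surj f_ker]]]]].
have f_rels j : f (rels j) = 0 by apply/f_ker/in_twosided_ideal_rel.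
have [e f_e] := f_surj (1, 0).
pose rels' (j : 'I_m.+1) := if unlift ord_max j is Some j' then rels j' else e.
have rels'_lift j : rels' (lift ord_max j) = rels j by rewrite /rels' liftK.
have rels'_max : rels' ord_max = e by rewrite /rels' unlift_none.
exists n, m.+1, rels', (snd \o f); split.
  by move=> b; have [p f_p] := f_surj (0, b); exists p; rewrite /= f_p.
move=> p; split=> [/= f2_p0 | ]; last first.
  apply: rmorph_twosided_ideal_eq0 => j /=.
  by case: (unliftP ord_max j) => [j'|] ->; rewrite ?rels'_lift ?f_rels ?rels'_max ?f_e.
have -> : p = (p - p * e) + p * rels' ord_max * 1 by rewrite rels'_max mulr1 subrK.
apply: in_twosided_idealD; last exact: in_twosided_ideal_gen.
apply: (in_twosided_ideal_reindex (rels := rels) (h := lift ord_max)).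
  by move=> j; rewrite /= rels'_lift.
apply/f_ker; rewrite rmorphB rmorphM f_e.
by case: (f p) f2_p0 => a b /= ->; rewrite mul_pairE mulr1 mul0r subrr.
Qed.

Definition eventually (P : nat -> Prop) : Prop :=
  exists M, forall N, (M <= N)%N -> P N.

Lemma eventually_and (P Q : nat -> Prop) :
  eventually P -> eventually Q -> eventually (fun N => P N /\ Q N).
Proof.
move=> [M PM] [M' QM']; exists (maxn M M') => N; rewrite geq_max => /andP[le_MN le_M'N].
by split; [apply: PM | apply: QM'].
Qed.

Lemma eventually_forall (I : finType) (P : I -> nat -> Prop) :
  (forall i, eventually (P i)) -> eventually (fun N => forall i, P i N).
Proof.
move=> /fin_all_exists[M PM]; exists (\max_i M i) => N le_MN i.
by apply: PM; apply: leq_trans le_MN; apply: leq_bigmax.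
Qed.

(* Lift f through pi (phi) and pi through f (psi).  Late enough, ev N kills
   phi of the relations of f and every x_i - phi (psi x_i); then
   ev N = ev N \o phi \o psi, and psi maps ker pi into the relation ideal. *)
Lemma finitely_presented_kernel_eventually (Q : nzRingType) k
    (pi : {rmorphism free_ring k -> Q}) (T : nat -> nzRingType)
    (ev : forall N, {rmorphism free_ring k -> T N}) :
  finitely_presented Q -> (forall q, exists u, pi u = q) ->
  (forall u, pi u = 0 -> eventually (fun N => ev N u = 0)) ->
  eventually (fun N => forall u, pi u = 0 -> ev N u = 0).
Proof.
move=> [n [m [rels [f [f_surj f_ker]]]]] pi_surj pi_ker.
have [phi pi_phi] := free_lift pi f pi_surj.
have [psi f_psi] := free_lift f pi f_surj.
have [M evM] : eventually (fun N => (forall j, ev N (phi (rels j)) = 0) /\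
    forall i, ev N (phi (psi (free_gen i)) - free_gen i) = 0).
  apply: eventually_and; apply: eventually_forall => x; apply: pi_ker.
    by rewrite pi_phi; apply/f_ker/in_twosided_ideal_rel.
  by rewrite rmorphB /= pi_phi f_psi subrr.
exists M => N /evM[ev_rels ev_gen] u pi_u.
have ev_phi_psi : ev N \o phi \o psi =1 ev N.
  by apply: free_rmorph_ext => i; apply/eqP; rewrite /= -subr_eq0 -rmorphB ev_gen.
rewrite -ev_phi_psi; apply: (rmorph_twosided_ideal_eq0 (g := ev N \o phi) ev_rels).
by apply/f_ker; rewrite f_psi.
Qed.

HB.mixin Record isMulrIdealClosed (R : nzRingType) (S : R -> bool) := {
  ideal_mulr_closed_subproof : forall a, {in S, forall u, u * a \in S}
}.

(* ring_quotient only puts a ring structure on quotients of commutative rings. *)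
#[short(type="twosided_ideal")]
HB.structure Definition TwosidedIdeal (R : nzRingType) :=
  {S of Idealr R S & isMulrIdealClosed R S}.

Section TwosidedQuotient.
Variables (R : nzRingType) (I : twosided_ideal R).
Local Open Scope quotient_scope.

Lemma twosided_idealM a u : u \in I -> u * a \in I.
Proof. exact: ideal_mulr_closed_subproof. Qed.

Definition tquot := Quotient.quot I.
HB.instance Definition _ := GRing.Zmodule.on tquot.

Local Notation pi := \pi_tquot.

Definition tquot_mul (x y : tquot) : tquot := pi (repr x * repr y).

Lemma tquot_eq x y : (pi x == pi y) = (x - y \in I).
Proof. by rewrite Quotient.idealrBE. Qed.

Lemma pi_tquot_mul x y : pi (x * y) = tquot_mul (pi x) (pi y).
Proof.
apply/eqP; rewrite tquot_eq.
set x' := repr (pi x); set y' := repr (pi y).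
have hx : x - x' \in I by rewrite -tquot_eq reprK.
have hy : y - y' \in I by rewrite -tquot_eq reprK.
have -> : x * y - x' * y' = (x - x') * y + x' * (y - y').
  by rewrite mulrBl mulrBr addrA subrK.
by apply: rpredD; [apply: twosided_idealM | apply: idealMr].
Qed.

Lemma tquot_mulA : associative tquot_mul.
Proof.
elim/quotW=> a; elim/quotW=> b; elim/quotW=> c.
by rewrite -(pi_tquot_mul b) -(pi_tquot_mul a) -(pi_tquot_mul a b) -pi_tquot_mul mulrA.
Qed.

Lemma tquot_mul1q : left_id (pi 1) tquot_mul.
Proof. by elim/quotW=> a; rewrite -pi_tquot_mul mul1r. Qed.

Lemma tquot_mulq1 : right_id (pi 1) tquot_mul.
Proof. by elim/quotW=> a; rewrite -pi_tquot_mul mulr1. Qed.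

Lemma tquot_mulDl : left_distributive tquot_mul +%R.
Proof.
elim/quotW=> a; elim/quotW=> b; elim/quotW=> c.
by rewrite -raddfD -!pi_tquot_mul mulrDl raddfD.
Qed.

Lemma tquot_mulDr : right_distributive tquot_mul +%R.
Proof.
elim/quotW=> a; elim/quotW=> b; elim/quotW=> c.
by rewrite -raddfD -!pi_tquot_mul mulrDr raddfD.
Qed.

Lemma tquot_one_neq0 : pi 1 != 0.
Proof. by rewrite -(raddf0 pi) tquot_eq subr0 idealr1. Qed.

HB.instance Definition _ := GRing.Zmodule_isNzRing.Build tquot
  tquot_mulA tquot_mul1q tquot_mulq1 tquot_mulDl tquot_mulDr tquot_one_neq0.

Definition tquot_pi (x : R) : tquot := pi x.

Lemma tquot_pi_is_monoid_morphism : monoid_morphism tquot_pi.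
Proof. by split=> // x y; rewrite /tquot_pi pi_tquot_mul. Qed.

HB.instance Definition _ := GRing.isZmodMorphism.Build R tquot tquot_pi (raddfB pi).
HB.instance Definition _ := GRing.isMonoidMorphism.Build R tquot tquot_pi
  tquot_pi_is_monoid_morphism.

Lemma tquot_pi_surj (q : tquot) : exists x, tquot_pi x = q.
Proof. by exists (repr q); rewrite /tquot_pi reprK. Qed.

Lemma tquot_pi_eq0 x : tquot_pi x = 0 <-> x \in I.
Proof. by have := tquot_eq x 0; rewrite subr0 raddf0 => <-; split=> /eqP. Qed.

End TwosidedQuotient.

Section EventualKernel.
Variables (A : nzRingType) (T : nat -> nzRingType) (ev : forall N, {rmorphism A -> T N}).

Definition eventual_kernel : {pred A} := fun u => `[< eventually (fun N => ev N u = 0) >].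

Lemma eventual_kernelP u :
  reflect (eventually (fun N => ev N u = 0)) (u \in eventual_kernel).
Proof. exact: asboolP. Qed.

Lemma eventual_kernel_zmod_closed : zmod_closed eventual_kernel.
Proof.
split; first by apply/eventual_kernelP; exists 0%N => N _; rewrite rmorph0.
move=> u v /eventual_kernelP ev_u /eventual_kernelP ev_v; apply/eventual_kernelP.
have [M evM] := eventually_and ev_u ev_v.
by exists M => N /evM[ev_u0 ev_v0]; rewrite rmorphB ev_u0 ev_v0 subrr.
Qed.

Lemma eventual_kernel_proper :
  1 \notin eventual_kernel /\
  forall a, {in eventual_kernel, forall u, a * u \in eventual_kernel}.
Proof.
split=> [|a u /eventual_kernelP[M evM]]; last first.
  by apply/eventual_kernelP; exists M => N /evM ev_u; rewrite rmorphM ev_u mulr0.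
by apply/eventual_kernelP=> -[M /(_ M (leqnn M))/eqP]; rewrite rmorph1 oner_eq0.
Qed.

Lemma eventual_kernel_mulr_closed a :
  {in eventual_kernel, forall u, u * a \in eventual_kernel}.
Proof.
move=> u /eventual_kernelP[M evM]; apply/eventual_kernelP.
by exists M => N /evM ev_u; rewrite rmorphM ev_u mul0r.
Qed.

HB.instance Definition _ := GRing.isZmodClosed.Build A eventual_kernel
  eventual_kernel_zmod_closed.
HB.instance Definition _ := isProperIdeal.Build A eventual_kernel
  eventual_kernel_proper.
HB.instance Definition _ := isMulrIdealClosed.Build A eventual_kernel
  eventual_kernel_mulr_closed.

End EventualKernel.

Section CornerShift.
Variables (R : nzRingType) (N : nat).

Definition corner_mx : 'M[R]_N.+1 := delta_mx ord_max ord0.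

Definition shift_mx : 'M[R]_N.+1 := \matrix_(i, j) (i.+1 == j :> nat)%:R.

Lemma shift_mxX k i j : (shift_mx ^+ k) i j = (i + k == j)%N%:R.
Proof.
elim: k i j => [|k IHk] i j; first by rewrite expr0 mxE addn0.
rewrite exprSr -mulmxE mxE; under eq_bigr => l _ do rewrite IHk mxE.
case: (ltnP (i + k) N.+1) => [lt_ik | le_ik].
  rewrite (bigD1 (Ordinal lt_ik)) //= eqxx mul1r addnS big1 ?addr0 // => l ne_l.
  by move: ne_l; rewrite -val_eqE eq_sym => /negbTE ->; rewrite mul0r.
rewrite big1 => [|l _]; last first.
  by rewrite (gtn_eqF (leq_trans (ltn_ord l) le_ik)) mul0r.
by rewrite addnS gtn_eqF // ltnS ltnW // (leq_trans (ltn_ord j) le_ik).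
Qed.

Lemma corner_mx_sandwich A : corner_mx * A * corner_mx = A ord0 ord_max *: corner_mx.
Proof.
apply/matrixP => i j; rewrite -!mulmxE !mxE.
rewrite (bigD1 ord_max) //= big1 ?addr0 => [|l /negbTE ne_l]; last first.
  by rewrite [delta_mx _ _ l j]mxE ne_l mulr0.
rewrite [delta_mx _ _ ord_max j]mxE eqxx mxE.
rewrite (bigD1 ord0) //= big1 ?addr0 => [|l /negbTE ne_l]; last first.
  by rewrite [delta_mx _ _ i l]mxE ne_l andbF mul0r.
rewrite [delta_mx _ _ i ord0]mxE eqxx andbT.
by case: (i == ord_max); case: (j == ord0); rewrite ?mul1r ?mulr1 ?mul0r ?mulr0.
Qed.

Lemma corner_mx_neq0 : corner_mx != 0.
Proof.
by apply/eqP => /matrixP/(_ ord_max ord0); rewrite !mxE !eqxx; apply/eqP/oner_neq0.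
Qed.

End CornerShift.

Definition corner_shift_rep N : {rmorphism free_ring 2 -> 'M[int]_N.+1} :=
  free_eval (fun i : 'I_2 => if i == ord0 then corner_mx int N else shift_mx int N).

Definition sandwich_word N : free_ring 2 :=
  free_gen ord0 * free_gen ord_max ^+ N * free_gen ord0.

Lemma corner_shift_rep_sandwich M N :
  corner_shift_rep M (sandwich_word N) = (N == M)%:R *: corner_mx int M.
Proof.
by rewrite !rmorphM rmorphXn /= !free_eval_gen /= corner_mx_sandwich shift_mxX.
Qed.

Definition corner_shift_quot := tquot (eventual_kernel corner_shift_rep).

Lemma corner_shift_quot_not_finitely_presented :
  ~ finitely_presented corner_shift_quot.
Proof.
move=> fpQ; set I := eventual_kernel corner_shift_rep.
have ker_ev u : tquot_pi I u = 0 -> eventually (fun N => corner_shift_rep N u = 0).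
  by move/tquot_pi_eq0/eventual_kernelP.
have [M kerM] := finitely_presented_kernel_eventually fpQ (@tquot_pi_surj _ I) ker_ev.
have /(kerM M (leqnn M))/eqP : tquot_pi I (sandwich_word M) = 0.
  apply/tquot_pi_eq0/eventual_kernelP; exists M.+1 => N lt_MN.
  by rewrite corner_shift_rep_sandwich ltn_eqF //= scale0r.
by rewrite /= corner_shift_rep_sandwich eqxx scale1r (negPf (corner_mx_neq0 _ _)).
Qed.

Section PairGraph.
Variables (A B : nzRingType) (pi : {rmorphism A -> B}).

Definition pair_graph (a : A) : A * B := (a, pi a).

Lemma pair_graph_is_zmod_morphism : zmod_morphism pair_graph.
Proof. by move=> a b; rewrite /pair_graph rmorphB. Qed.

Lemma pair_graph_is_monoid_morphism : monoid_morphism pair_graph.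
Proof. by split=> [|a b]; rewrite /pair_graph ?rmorph1 ?rmorphM. Qed.

HB.instance Definition _ := GRing.isZmodMorphism.Build A (A * B)%type pair_graph
  pair_graph_is_zmod_morphism.
HB.instance Definition _ := GRing.isMonoidMorphism.Build A (A * B)%type pair_graph
  pair_graph_is_monoid_morphism.

Lemma pair_graph_inj : injective pair_graph.
Proof. by move=> a b []. Qed.

Lemma pair_graph_decompose : (forall b, exists a, pi a = b) ->
  forall r : A * B, exists s t, r = pair_graph s * (1, 0) + pair_graph t * (1 - (1, 0)).
Proof.
move=> pi_surj [a b]; have [t pi_t] := pi_surj b; exists a, t.
rewrite -[1 - (1, 0)]/((1 - 1, 1 - 0) : A * B) subrr subr0 !mul_pairE pi_t.
by rewrite !mulr1 !mulr0 -[RHS]/(a + 0, 0 + b) addr0 add0r.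
Qed.

End PairGraph.

Theorem lemma4p1 :
  exists (R S : nzRingType) (iota : {rmorphism S -> R}) (e : R),
    injective iota /\
    e * e = e /\ (forall r : R, e * r = r * e) /\
    (forall r : R, exists s t : S, r = iota s * e + iota t * (1 - e)) /\
    finitely_presented S /\ ~ finitely_presented R.
Proof.
pose S := free_ring 2; pose Q := corner_shift_quot.
pose pi : {rmorphism S -> Q} := tquot_pi (eventual_kernel corner_shift_rep).
exists (S * Q)%type, S, (pair_graph pi), (1, 0).
split; first exact: pair_graph_inj.
split; first by rewrite mul_pairE mulr1 mulr0.
split; first by case=> a b; rewrite !mul_pairE mul1r mulr1 mul0r mulr0.
split; first exact/pair_graph_decompose/tquot_pi_surj.
split; first exact: free_ring_finitely_presented.
by move/finitely_presented_snd; apply: corner_shift_quot_not_finitely_presented.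
Qed.
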